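(* For every $d\ge1$, $\mathsf{sumPI}(\mathcal{A}^d)=2.5^d$.
   Context: $\mathcal{A}:\{0,1\}^4\to\{0,1\}$ is the function with $\mathcal{A}(x)=1$ iff $x\in\{0000,0001,0011,0111,1111,1110,1100,1000\}$, i.e. iff $x_1\le x_2\le x_3\le x_4$ or $x_1\ge x_2\ge x_3\ge x_4$. For $f:\{0,1\}^n\to\{0,1\}$, its $d$th iteration $f^d:\{0,1\}^{n^d}\to\{0,1\}$ is defined by $f^1=f$ and $f^{d+1}(x)=f\big(f^d(x_1,\dots,x_{n^d}),\ f^d(x_{n^d+1},\dots,x_{2n^d}),\ \dots,\ f^d(x_{(n-1)n^d+1},\dots,x_{n^{d+1}})\big)$. For $g:\{0,1\}^N\to\{0,1\}$, with $p=\{p_x\}$ ranging over families of probability distributions on $[N]$, $$\mathsf{sumPI}(g)=\min_{p}\ \max_{x,y:\ g(x)\neq g(y)} \frac{1}{\sum_{i:\,x_i\neq y_i}\sqrt{p_x(i)p_y(i)}}.$$ *)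

From HB Require Import structures.
From mathcomp Require Import all_boot all_order all_algebra.
From mathcomp Require Import reals constructive_ereal.
Set Implicit Arguments. Unset Strict Implicit. Unset Printing Implicit Defensive.
Import Order.TTheory GRing.Theory Num.Theory.
Local Open Scope ring_scope.

(* Boolean strings of length N: finite functions 'I_N -> bool; x i is the
   (i+1)-th bit (0-indexed coordinates). *)
Notation bits N := {ffun 'I_N -> bool}.

Definition Afun (x1 x2 x3 x4 : bool) : bool :=
  [&& (x1 <= x2)%N, (x2 <= x3)%N & (x3 <= x4)%N] ||
  [&& (x2 <= x1)%N, (x3 <= x2)%N & (x4 <= x3)%N].

Fixpoint iterA (d : nat) (x : nat -> bool) : bool :=
  match d with
  | 0 => x 0%N
  | d'.+1 => Afun (iterA d' (fun k => x k))
                  (iterA d' (fun k => x (4 ^ d' + k)%N))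
                  (iterA d' (fun k => x (2 * 4 ^ d' + k)%N))
                  (iterA d' (fun k => x (3 * 4 ^ d' + k)%N))
  end.

Definition Aiter (d : nat) (x : bits (4 ^ d)) : bool :=
  iterA d (fun k => match insub k with Some i => x i | None => false end).

Definition prob_family (R : realType) (N : nat) (p : bits N -> 'I_N -> R) : Prop :=
  forall x, (forall i, 0 <= p x i) /\ \sum_(i < N) p x i = 1.

Definition overlap (R : realType) (N : nat) (p : bits N -> 'I_N -> R)
  (x y : bits N) : R :=
  \sum_(i < N | x i != y i) Num.sqrt (p x i * p y i).

Definition pair_val (R : realType) (N : nat) (p : bits N -> 'I_N -> R)
  (x y : bits N) : \bar R :=
  if overlap p x y == 0 then +oo%E else ((overlap p x y)^-1)%:E.

Definition sumPI_obj (R : realType) (N : nat) (g : bits N -> bool)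
  (p : bits N -> 'I_N -> R) : \bar R :=
  \big[Order.max/-oo%E]_(xy : bits N * bits N | g xy.1 != g xy.2)
     pair_val p xy.1 xy.2.

(* "sumPI(g) = v", where sumPI is a minimum over probability families:
   the minimum is attained with value v. *)
Definition sumPI_is (R : realType) (N : nat) (g : bits N -> bool) (v : \bar R) : Prop :=
  (exists2 p, prob_family p & sumPI_obj g p = v) /\
  (forall p, prob_family p -> (v <= sumPI_obj g p)%E).

(* Both bounds come from objects that compose under block composition f o g^n.
   Upper bound: for A the family p_z(k) = r_z(k)^2 / 10, where r_z(k) is 2 on the two
   coordinates at which A is sensitive at z and 1 on the other two, has overlap at least
   4/10 on every pair of inputs with different values, and product families multiply
   overlaps.  Lower bound: a weighted adversary (G, delta, w, omega) with eigenvalue lam and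
   query load s forces, by AM-GM on each query, a pair of different values with overlap at
   most s / lam under any family.  A has one with lam = 10 and s = 4, and the tensor product
   of adversaries for f and g is one for f o g^n with eigenvalue lam_f lam^n and load
   s_f s lam^(n-1).  Hence both bounds on A^d are (2/5)^d. *)

From HB Require Import structures.
From mathcomp Require Import all_boot all_order all_algebra.
From mathcomp Require Import reals constructive_ereal.
From mathcomp Require Import ring lra zify.
Set Implicit Arguments. Unset Strict Implicit. Unset Printing Implicit Defensive.
Import Order.TTheory GRing.Theory Num.Theory.
Local Open Scope ring_scope.

Lemma amgm_weighted (R : realDomainType) (a b w w' : R) :
  0 < w -> w * w' = 1 -> 2 * (a * b) <= w * a ^+ 2 + w' * b ^+ 2.
Proof. move=> w_gt0 ww'; have : 0 <= (w * a - b) ^+ 2 by exact: sqr_ge0. nra. Qed.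

Lemma quadratic_form_le (R : realFieldType) (T : finType) (P : rel T)
    (G w : T -> T -> R) (a : T -> R) :
  symmetric P -> (forall x y, 0 <= G x y) -> (forall x y, G x y = G y x) ->
  (forall x y, 0 < w x y) -> (forall x y, w x y * w y x = 1) ->
  \sum_x \sum_(y | P x y) G x y * (a x * a y) <=
  \sum_x \sum_(y | P x y) G x y * w x y * a x ^+ 2.
Proof.
move=> Psym G_ge0 GC w_gt0 wV.
set S := (X in _ <= X).
have swap : S = \sum_x \sum_(y | P x y) G x y * w y x * a y ^+ 2.
  rewrite /S (exchange_big_dep predT) //=; apply: eq_bigr => x _.
  by apply: eq_big => [y|y _]; rewrite 1?Psym // GC.
have -> : S = (S + S) / 2 by lra.
rewrite {2}swap -big_split /= mulr_suml; apply: ler_sum => x _.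
rewrite -big_split /= mulr_suml; apply: ler_sum => y _.
have := ler_wpM2l (G_ge0 x y) (amgm_weighted (a x) (a y) (w_gt0 x y) (wV x y)).
lra.
Qed.

Lemma sum_bij (R : nmodType) (I J : finType) (h : J -> I) (P : pred I) (F : I -> R) :
  bijective h -> \sum_(i | P i) F i = \sum_(j | P (h j)) F (h j).
Proof. by move=> h_bij; apply: reindex; apply: onW_bij. Qed.

Section Adversary.
Variables (R : rcfType) (T V : finType) (q : T -> V -> bool) (g : T -> bool).

Definition probfam (p : T -> V -> R) :=
  forall x, (forall v, 0 <= p x v) /\ \sum_v p x v = 1.

Definition qoverlap (p : T -> V -> R) (x y : T) :=
  \sum_(v | q x v != q y v) Num.sqrt (p x v * p y v).

Lemma qoverlap_ge0 p x y : 0 <= qoverlap p x y.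
Proof. by apply: sumr_ge0 => v _; exact: sqrtr_ge0. Qed.

(* sumPI(g) <= 1/c *)
Definition overlap_achievable (c : R) :=
  exists2 p, probfam p & forall x y, g x != g y -> c <= qoverlap p x y.

(* [adv_ratio] holds the weights of the AM-GM inequality applied at each query. *)
Record adversary (lam s : R) := Adversary {
  adv_weight :> T -> T -> R;
  adv_vec : T -> R;
  adv_ratio : T -> T -> V -> R;
  adv_dratio : T -> T -> R;
  adv_weight_ge0 : forall x y, 0 <= adv_weight x y;
  adv_weightC : forall x y, adv_weight x y = adv_weight y x;
  adv_weight_eq0 : forall x y, g x = g y -> adv_weight x y = 0;
  adv_vec_ge0 : forall x, 0 <= adv_vec x;
  adv_vec_gt0 : forall b, exists2 x, g x = b & 0 < adv_vec x;
  adv_eigen : forall x, lam * adv_vec x <= \sum_y adv_weight x y * adv_vec y;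
  adv_ratio_gt0 : forall x y v, 0 < adv_ratio x y v;
  adv_ratioV : forall x y v, adv_ratio x y v * adv_ratio y x v = 1;
  adv_load : forall x v,
    \sum_(y | q x v != q y v) adv_weight x y * adv_ratio x y v <= s;
  adv_dratio_gt0 : forall x y, 0 < adv_dratio x y;
  adv_dratioV : forall x y, adv_dratio x y * adv_dratio y x = 1;
  adv_dload : forall x, \sum_y adv_weight x y * adv_dratio x y <= lam
}.

(* sumPI(g) >= 1/c, see [adversary_bound_overlap] *)
Definition adversary_bound (c : R) :=
  exists2 lam, 0 < lam & inhabited (adversary lam (c * lam)).

End Adversary.

Section AdversaryOverlap.
Variables (R : rcfType) (T V : finType) (q : T -> V -> bool) (g : T -> bool).
Variables (lam s : R) (A : adversary q g lam s) (p : T -> V -> R).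
Hypothesis p_prob : probfam p.

Let dl := adv_vec A.

Lemma adversary_energy :
  \sum_x \sum_y A x y * (dl x * dl y) * qoverlap q p x y <= s * \sum_x dl x ^+ 2.
Proof.
have p_ge0 x v : 0 <= p x v by case: (p_prob x).
pose a v x := dl x * Num.sqrt (p x v).
have -> : \sum_x \sum_y A x y * (dl x * dl y) * qoverlap q p x y =
    \sum_v \sum_x \sum_(y | q x v != q y v) A x y * (a v x * a v y).
  rewrite [RHS]exchange_big /=; apply: eq_bigr => x _.
  rewrite [RHS](exchange_big_dep predT) //=; apply: eq_bigr => y _.
  rewrite /qoverlap mulr_sumr; apply: eq_bigr => v _.
  rewrite /a sqrtrM //; ring.
apply: le_trans (_ : \sum_v \sum_x \sum_(y | q x v != q y v)
    A x y * adv_ratio A x y v * a v x ^+ 2 <= _).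
  apply: ler_sum => v _; apply: quadratic_form_le => [x y||||].
  - by rewrite eq_sym.
  - exact: adv_weight_ge0.
  - exact: adv_weightC.
  - by move=> x y; exact: adv_ratio_gt0.
  - by move=> x y; exact: adv_ratioV.
rewrite exchange_big mulr_sumr; apply: ler_sum => x _.
apply: le_trans (_ : \sum_v dl x ^+ 2 * p x v * s <= _); last first.
  by rewrite -mulr_suml -mulr_sumr (proj2 (p_prob x)) mulr1 mulrC.
apply: ler_sum => v _.
have -> : a v x ^+ 2 = dl x ^+ 2 * p x v by rewrite exprMn sqr_sqrtr.
rewrite -mulr_suml mulrC ler_wpM2l ?adv_load // mulr_ge0 // exprn_ge0 //.
exact: adv_vec_ge0.
Qed.

Lemma adversary_overlap :
  0 < lam -> exists x y, g x != g y /\ lam * qoverlap q p x y <= s.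
Proof.
move=> lam_gt0.
have [x1 gx1 dx1] := adv_vec_gt0 A true.
have [x0 gx0 dx0] := adv_vec_gt0 A false.
have sep : (x1, x0) \in [pred xy : T * T | g xy.1 != g xy.2] by rewrite inE gx1 gx0.
case: (arg_minP (fun xy => qoverlap q p xy.1 xy.2) sep) => -[x y] /= sep_xy min_xy.
exists x, y; split=> //.
set m := qoverlap q p x y.
have dl2_gt0 : 0 < \sum_z dl z ^+ 2.
  rewrite (bigD1 x1) //= ltr_wpDr ?exprn_gt0 //.
  by apply: sumr_ge0 => z _; exact: sqr_ge0.
have eig : lam * \sum_z dl z ^+ 2 <= \sum_x \sum_y A x y * (dl x * dl y).
  rewrite mulr_sumr; apply: ler_sum => z _.
  rewrite expr2 mulrCA.
  apply: le_trans (ler_wpM2l (adv_vec_ge0 A z) (adv_eigen A z)) _.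
  by rewrite mulr_sumr; apply: ler_sum => j _; rewrite mulrCA.
have min_le : m * \sum_x \sum_y A x y * (dl x * dl y) <=
    \sum_x \sum_y A x y * (dl x * dl y) * qoverlap q p x y.
  rewrite mulr_sumr; apply: ler_sum => x' _; rewrite mulr_sumr; apply: ler_sum => y' _.
  have [gxy'|gxy'] := eqVneq (g x') (g y').
    by rewrite adv_weight_eq0 // !mul0r mulr0.
  rewrite mulrC ler_wpM2l ?mulr_ge0 ?adv_weight_ge0 ?adv_vec_ge0 //.
  exact: (min_xy (x', y')).
have lower := ler_wpM2l (qoverlap_ge0 q p x y) eig; rewrite -/m in lower.
have := le_trans lower (le_trans min_le adversary_energy).
by rewrite mulrCA mulrA ler_pM2r.
Qed.

End AdversaryOverlap.

Lemma adversary_bound_overlap (R : rcfType) (T V : finType) (q : T -> V -> bool)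
    (g : T -> bool) (c : R) (p : T -> V -> R) :
  adversary_bound q g c -> probfam p ->
  exists x y, g x != g y /\ qoverlap q p x y <= c.
Proof.
move=> [lam lam_gt0 [A]] p_prob.
have [x [y [gxy ov]]] := adversary_overlap A p_prob lam_gt0.
by exists x, y; split; rewrite // -(ler_pM2l lam_gt0) [lam * c]mulrC.
Qed.

Definition bitq (I : finType) (z : {ffun I -> bool}) (i : I) : bool := z i.

Section ColourMap.
Variables (T : finType) (n : nat) (g : T -> bool).

Definition ffmap (x : {ffun 'I_n -> T}) : {ffun 'I_n -> bool} := [ffun k => g (x k)].

Lemma sum_ffmap_prod (R : comPzSemiRingType)
    (F : {ffun 'I_n -> bool} -> R) (h : 'I_n -> T -> R) :
  \sum_y F (ffmap y) * \prod_k h k (y k) =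
  \sum_z F z * \prod_k \sum_(t | g t == z k) h k t.
Proof.
rewrite (partition_big ffmap predT) //=; apply: eq_bigr => z _.
rewrite bigA_distr_big_dep mulr_sumr; apply: eq_big => [y|y /eqP <-] //.
apply/eqP/familyP => [<- k|y_z]; first by rewrite unfold_in /= ffunE.
by apply/ffunP => k; rewrite ffunE; apply/eqP; move: (y_z k); rewrite unfold_in.
Qed.

End ColourMap.

Section Composition.
Variables (R : rcfType) (T V : finType) (n : nat).
Variables (q : T -> V -> bool) (g : T -> bool) (f : {ffun 'I_n -> bool} -> bool).

Definition compq (x : {ffun 'I_n -> T}) (kv : 'I_n * V) : bool := q (x kv.1) kv.2.

Definition compf (x : {ffun 'I_n -> T}) : bool := f (ffmap g x).

Variables (lamf sf lam s : R).
Variables (Af : adversary (@bitq _) f lamf sf) (Ag : adversary q g lam s).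
Hypotheses (lam_ge0 : 0 <= lam) (s_ge0 : 0 <= s).

(* [G + lam I], as [G] vanishes within a value class *)
Definition shift_weight t u := if g t == g u then lam * (t == u)%:R else Ag t u.

Definition shift_dratio t u := if g t == g u then 1 else adv_dratio Ag t u.

Lemma shift_weight_ge0 t u : 0 <= shift_weight t u.
Proof. by rewrite /shift_weight; case: ifP; rewrite ?mulr_ge0 ?adv_weight_ge0. Qed.

Lemma shift_weightC t u : shift_weight t u = shift_weight u t.
Proof. by rewrite /shift_weight eq_sym [u == t]eq_sym adv_weightC. Qed.

Lemma shift_dratio_gt0 t u : 0 < shift_dratio t u.
Proof. by rewrite /shift_dratio; case: ifP; rewrite ?adv_dratio_gt0. Qed.

Lemma shift_dratioV t u : shift_dratio t u * shift_dratio u t = 1.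
Proof. by rewrite /shift_dratio eq_sym; case: ifP; rewrite ?mulr1 ?adv_dratioV. Qed.

Lemma sum_other_class t b (F : T -> R) : b != g t ->
  (forall u, g u = g t -> F u = 0) -> \sum_(u | g u == b) F u = \sum_u F u.
Proof.
move=> b_t F0; rewrite [RHS](bigID (fun u => g u == b)) /= [X in _ + X]big1 ?addr0 //.
by move=> u gu; apply: F0; move: b_t gu; case: b (g u) (g t) => [] [] [].
Qed.

Lemma sum_own_class t (F : T -> R) :
  \sum_(u | g u == g t) shift_weight t u * F u = lam * F t.
Proof.
rewrite (bigD1 t) //= big1 ?addr0 => [|u /andP [/eqP gu ut]].
  by rewrite /shift_weight !eqxx mulr1n mulr1.
by rewrite /shift_weight gu eqxx eq_sym (negbTE ut) mulr0 mul0r.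
Qed.

Lemma shift_weight_other t u : g t != g u -> shift_weight t u = Ag t u.
Proof. by rewrite /shift_weight => /negbTE ->. Qed.

Lemma shift_eigen t b :
  lam * adv_vec Ag t <= \sum_(u | g u == b) shift_weight t u * adv_vec Ag u.
Proof.
have [->|b_t] := eqVneq b (g t); first by rewrite sum_own_class.
rewrite (eq_bigr (fun u => Ag t u * adv_vec Ag u)) => [|u /eqP gu]; last first.
  by rewrite shift_weight_other // gu eq_sym.
rewrite (sum_other_class b_t) => [|u gu]; first exact: adv_eigen.
by rewrite adv_weight_eq0 ?mul0r.
Qed.

Lemma shift_dratio_other t u : g t != g u -> shift_dratio t u = adv_dratio Ag t u.
Proof. by rewrite /shift_dratio => /negbTE ->. Qed.

Lemma shift_dload t b :
  \sum_(u | g u == b) shift_weight t u * shift_dratio t u <= lam.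
Proof.
have [->|b_t] := eqVneq b (g t).
  by rewrite sum_own_class /shift_dratio eqxx mulr1.
rewrite (eq_bigr (fun u => Ag t u * adv_dratio Ag t u)) => [|u /eqP gu]; last first.
  by rewrite shift_weight_other ?shift_dratio_other // gu eq_sym.
rewrite (sum_other_class b_t) => [|u gu]; first exact: adv_dload.
by rewrite adv_weight_eq0 ?mul0r.
Qed.

Lemma shift_load t v b :
  \sum_(u | g u == b) (if q t v != q u v then shift_weight t u * adv_ratio Ag t u v else 0)
  <= (g t != b)%:R * s.
Proof.
have [->|b_t] := eqVneq b (g t).
  rewrite mul0r big1 // => u /eqP gu.
  have [<-|ut] := eqVneq t u; first by rewrite eqxx.
  by rewrite /shift_weight gu eqxx (negbTE ut) mulr0 mul0r if_same.
rewrite mul1r.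
rewrite (eq_bigr (fun u => if q t v != q u v then Ag t u * adv_ratio Ag t u v else 0));
  last by move=> u /eqP gu; rewrite shift_weight_other // gu eq_sym.
rewrite (sum_other_class b_t) => [|u gu]; last by rewrite adv_weight_eq0 ?mul0r ?if_same.
by rewrite -big_mkcond; exact: adv_load.
Qed.

Definition comp_weight x y :=
  Af (ffmap g x) (ffmap g y) * \prod_k shift_weight (x k) (y k).

Definition comp_vec x := adv_vec Af (ffmap g x) * \prod_k adv_vec Ag (x k).

Definition comp_ratio x y (kv : 'I_n * V) :=
  adv_ratio Af (ffmap g x) (ffmap g y) kv.1 * adv_ratio Ag (x kv.1) (y kv.1) kv.2 *
  \prod_(l | l != kv.1) shift_dratio (x l) (y l).

Definition comp_dratio x y :=
  adv_dratio Af (ffmap g x) (ffmap g y) * \prod_k shift_dratio (x k) (y k).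

Lemma comp_weight_ge0 x y : 0 <= comp_weight x y.
Proof.
by rewrite mulr_ge0 ?adv_weight_ge0 // prodr_ge0 // => k _; exact: shift_weight_ge0.
Qed.

Lemma comp_weightC x y : comp_weight x y = comp_weight y x.
Proof.
rewrite /comp_weight adv_weightC; congr (_ * _).
by apply: eq_bigr => k _; exact: shift_weightC.
Qed.

Lemma comp_weight_eq0 x y : compf x = compf y -> comp_weight x y = 0.
Proof. by move=> e; rewrite /comp_weight adv_weight_eq0 ?mul0r. Qed.

Lemma comp_vec_ge0 x : 0 <= comp_vec x.
Proof.
by rewrite mulr_ge0 ?adv_vec_ge0 // prodr_ge0 // => k _; exact: adv_vec_ge0.
Qed.

Lemma comp_vec_gt0 b : exists2 x, compf x = b & 0 < comp_vec x.
Proof.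
have [z fz dz] := adv_vec_gt0 Af b.
have [t1 gt1 dt1] := adv_vec_gt0 Ag true.
have [t0 gt0 dt0] := adv_vec_gt0 Ag false.
pose x := [ffun k => if z k then t1 else t0].
have xz : ffmap g x = z by apply/ffunP => k; rewrite !ffunE; case: (z k).
exists x; first by rewrite /compf xz.
rewrite /comp_vec xz mulr_gt0 // prodr_gt0 // => k _.
by rewrite ffunE; case: (z k).
Qed.

Lemma comp_eigen x :
  lamf * lam ^+ n * comp_vec x <= \sum_y comp_weight x y * comp_vec y.
Proof.
have -> : \sum_y comp_weight x y * comp_vec y =
    \sum_y Af (ffmap g x) (ffmap g y) * adv_vec Af (ffmap g y) *
      \prod_k (shift_weight (x k) (y k) * adv_vec Ag (y k)).
  by apply: eq_bigr => y _; rewrite /comp_weight /comp_vec big_split /=; ring.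
rewrite (sum_ffmap_prod g (fun z => Af (ffmap g x) z * adv_vec Af z)
  (fun k t => shift_weight (x k) t * adv_vec Ag t)).
apply: le_trans (_ : \sum_z Af (ffmap g x) z * adv_vec Af z *
    \prod_k (lam * adv_vec Ag (x k)) <= _).
  rewrite -mulr_suml big_split prodr_const card_ord /= /comp_vec.
  have -> : lamf * lam ^+ n * (adv_vec Af (ffmap g x) * \prod_k adv_vec Ag (x k)) =
      lamf * adv_vec Af (ffmap g x) * (lam ^+ n * \prod_k adv_vec Ag (x k)) by ring.
  apply: ler_wpM2r; last exact: adv_eigen.
  by rewrite mulr_ge0 ?exprn_ge0 // prodr_ge0 // => k _; exact: adv_vec_ge0.
apply: ler_sum => z _; apply: ler_wpM2l; first by rewrite mulr_ge0 ?adv_weight_ge0 ?adv_vec_ge0.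
apply: ler_prod => k _; rewrite mulr_ge0 ?adv_vec_ge0 //=; exact: shift_eigen.
Qed.

Lemma comp_ratio_gt0 x y kv : 0 < comp_ratio x y kv.
Proof.
rewrite !mulr_gt0 ?adv_ratio_gt0 // prodr_gt0 // => l _; exact: shift_dratio_gt0.
Qed.

Lemma comp_ratioV x y kv : comp_ratio x y kv * comp_ratio y x kv = 1.
Proof.
rewrite /comp_ratio mulrACA (mulrACA (adv_ratio _ _ _ _)) !adv_ratioV !mul1r.
by rewrite -big_split big1 // => l _; exact: shift_dratioV.
Qed.

Lemma comp_dratio_gt0 x y : 0 < comp_dratio x y.
Proof.
rewrite mulr_gt0 ?adv_dratio_gt0 // prodr_gt0 // => l _; exact: shift_dratio_gt0.
Qed.

Lemma comp_dratioV x y : comp_dratio x y * comp_dratio y x = 1.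
Proof.
rewrite /comp_dratio mulrACA adv_dratioV mul1r.
by rewrite -big_split big1 // => l _; exact: shift_dratioV.
Qed.

Lemma comp_dload x : \sum_y comp_weight x y * comp_dratio x y <= lamf * lam ^+ n.
Proof.
have -> : \sum_y comp_weight x y * comp_dratio x y =
    \sum_y Af (ffmap g x) (ffmap g y) * adv_dratio Af (ffmap g x) (ffmap g y) *
      \prod_k (shift_weight (x k) (y k) * shift_dratio (x k) (y k)).
  by apply: eq_bigr => y _; rewrite /comp_weight /comp_dratio big_split /=; ring.
rewrite (sum_ffmap_prod g (fun z => Af (ffmap g x) z * adv_dratio Af (ffmap g x) z)
  (fun k t => shift_weight (x k) t * shift_dratio (x k) t)).
apply: le_trans (_ : \sum_z Af (ffmap g x) z * adv_dratio Af (ffmap g x) z *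
    \prod_(k < n) lam <= _).
  apply: ler_sum => z _; apply: ler_wpM2l.
    by rewrite mulr_ge0 ?adv_weight_ge0 ?ltW ?adv_dratio_gt0.
  apply: ler_prod => k _; rewrite shift_dload andbT.
  by rewrite sumr_ge0 // => t _; rewrite mulr_ge0 ?shift_weight_ge0 ?ltW ?shift_dratio_gt0.
rewrite prodr_const card_ord -mulr_suml ler_wpM2r ?exprn_ge0 //.
exact: adv_dload.
Qed.

Lemma prod_neq_const (k : 'I_n) (c : R) : \prod_(l | l != k) c = c ^+ n.-1.
Proof. by rewrite prodr_const cardC1 card_ord. Qed.

Definition load_factor (x : {ffun 'I_n -> T}) (k : 'I_n) (v : V) (l : 'I_n) (t : T) :=
  if l == k then
    (if q (x k) v != q t v then shift_weight (x k) t * adv_ratio Ag (x k) t v else 0)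
  else shift_weight (x l) t * shift_dratio (x l) t.

Lemma load_factor_ge0 x k v l t : 0 <= load_factor x k v l t.
Proof.
rewrite /load_factor; case: (l == k); last first.
  by rewrite mulr_ge0 ?shift_weight_ge0 ?ltW ?shift_dratio_gt0.
by case: ifP => // _; rewrite mulr_ge0 ?shift_weight_ge0 ?ltW ?adv_ratio_gt0.
Qed.

Lemma comp_load_factor x k v :
  \sum_(y | compq x (k, v) != compq y (k, v)) comp_weight x y * comp_ratio x y (k, v) =
  \sum_y Af (ffmap g x) (ffmap g y) * adv_ratio Af (ffmap g x) (ffmap g y) k *
    \prod_l load_factor x k v l (y l).
Proof.
rewrite big_mkcond; apply: eq_bigr => y _.
rewrite /comp_weight /comp_ratio /compq /= (bigD1 k) //=.
rewrite [\prod_l load_factor _ _ _ l _](bigD1 k) //=.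
have -> : \prod_(l | l != k) load_factor x k v l (y l) =
    \prod_(l | l != k) (shift_weight (x l) (y l) * shift_dratio (x l) (y l)).
  by apply: eq_bigr => l /negbTE lk; rewrite /load_factor lk.
rewrite /load_factor eqxx big_split /=; case: (q (x k) v != q (y k) v); first by ring.
by rewrite !mul0r mulr0.
Qed.

Lemma comp_load x kv :
  \sum_(y | compq x kv != compq y kv) comp_weight x y * comp_ratio x y kv <=
  sf * s * lam ^+ n.-1.
Proof.
case: kv => k v; rewrite comp_load_factor.
rewrite (sum_ffmap_prod g (fun z => Af (ffmap g x) z * adv_ratio Af (ffmap g x) z k)).
apply: le_trans (_ : \sum_z Af (ffmap g x) z * adv_ratio Af (ffmap g x) z k *
    ((g (x k) != z k)%:R * s * lam ^+ n.-1) <= _).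
  apply: ler_sum => z _; apply: ler_wpM2l.
    by rewrite mulr_ge0 ?adv_weight_ge0 ?ltW ?adv_ratio_gt0.
  rewrite (bigD1 k) //= -(prod_neq_const k) ler_pM ?sumr_ge0 ?prodr_ge0 //.
  - by move=> t _; exact: load_factor_ge0.
  - by move=> l _; rewrite sumr_ge0 // => t _; exact: load_factor_ge0.
  - by rewrite /load_factor eqxx shift_load.
  - apply: ler_prod => l lk; rewrite sumr_ge0 //= => [|t _]; last exact: load_factor_ge0.
    by rewrite /load_factor (negbTE lk) shift_dload.
rewrite -mulrA; apply: le_trans (ler_wpM2r _ (adv_load Af (ffmap g x) k)).
  rewrite mulr_suml [in X in _ <= X]big_mkcond; apply: ler_sum => z _.
  by rewrite /bitq ffunE; case: (g (x k) != z k); rewrite ?mul0r ?mulr0 //= mul1r mulrA.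
by rewrite mulr_ge0 ?exprn_ge0.
Qed.

Definition adversary_comp :
    adversary compq compf (lamf * lam ^+ n) (sf * s * lam ^+ n.-1) :=
  Adversary comp_weight_ge0 comp_weightC comp_weight_eq0 comp_vec_ge0 comp_vec_gt0
    comp_eigen comp_ratio_gt0 comp_ratioV comp_load comp_dratio_gt0 comp_dratioV comp_dload.

End Composition.

Lemma adversary_bound_comp (R : rcfType) (T V : finType) (n : nat)
    (q : T -> V -> bool) (g : T -> bool) (f : {ffun 'I_n -> bool} -> bool) (cf c : R) :
  (0 < n)%N -> 0 <= c -> adversary_bound (@bitq _) f cf -> adversary_bound q g c ->
  adversary_bound (compq q) (compf g f) (cf * c).
Proof.
move=> n_gt0 c_ge0 [lamf lamf_gt0 [Af]] [lam lam_gt0 [Ag]].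
exists (lamf * lam ^+ n); first by rewrite mulr_gt0 ?exprn_gt0.
have -> : cf * c * (lamf * lam ^+ n) = cf * lamf * (c * lam) * lam ^+ n.-1.
  by rewrite -{1}(prednK n_gt0) exprS; ring.
by constructor; apply: (adversary_comp Af Ag); rewrite ?mulr_ge0 // ltW.
Qed.

Lemma overlap_achievable_comp (R : rcfType) (T V : finType) (n : nat)
    (q : T -> V -> bool) (g : T -> bool) (f : {ffun 'I_n -> bool} -> bool) (cf c : R) :
  0 <= c -> overlap_achievable (@bitq _) f cf -> overlap_achievable q g c ->
  overlap_achievable (compq q) (compf g f) (cf * c).
Proof.
move=> c_ge0 [pf pf_prob pf_ov] [p p_prob p_ov].
have pf_ge0 z k : 0 <= pf z k by case: (pf_prob z).
have p_ge0 t v : 0 <= p t v by case: (p_prob t).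
exists (fun x kv => pf (ffmap g x) kv.1 * p (x kv.1) kv.2).
  move=> x; split=> [[k v]|]; first exact: mulr_ge0.
  rewrite -(pair_bigA _ (fun k v => pf (ffmap g x) k * p (x k) v)) /=.
  rewrite -(proj2 (pf_prob (ffmap g x))); apply: eq_bigr => k _.
  by rewrite -mulr_sumr (proj2 (p_prob (x k))) mulr1.
move=> x y fxy.
pose ov k v := Num.sqrt (pf (ffmap g x) k * p (x k) v * (pf (ffmap g y) k * p (y k) v)).
have block k : \sum_(v | q (x k) v != q (y k) v) ov k v =
    Num.sqrt (pf (ffmap g x) k * pf (ffmap g y) k) * qoverlap q p (x k) (y k).
  rewrite /qoverlap mulr_sumr; apply: eq_bigr => v _.
  by rewrite -sqrtrM ?mulr_ge0 //; congr Num.sqrt; ring.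
rewrite /qoverlap -(pair_big_dep predT (fun k v => q (x k) v != q (y k) v) ov) /=.
under eq_bigr do rewrite block.
apply: le_trans (_ : (\sum_(k | ffmap g x k != ffmap g y k)
    Num.sqrt (pf (ffmap g x) k * pf (ffmap g y) k)) * c <= _).
  exact: ler_wpM2r (pf_ov _ _ fxy).
rewrite mulr_suml [X in X <= _]big_mkcond [X in _ <= X]big_mkcond.
apply: ler_sum => k _; rewrite !ffunE; case: ifP => gxy.
  by rewrite ler_wpM2l ?sqrtr_ge0 ?p_ov.
by rewrite mulr_ge0 ?sqrtr_ge0 ?qoverlap_ge0.
Qed.

Section Transfer.
Variables (R : rcfType) (T T' V V' : finType).
Variables (q : T -> V -> bool) (q' : T' -> V' -> bool) (g : T -> bool) (g' : T' -> bool).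
Variables (phi : T -> T') (rho : V -> V').
Hypotheses (rho_bij : bijective rho).
Hypotheses (q_phi : forall x v, q x v = q' (phi x) (rho v)) (g_phi : forall x, g x = g' (phi x)).

Lemma overlap_achievable_transfer (c : R) :
  overlap_achievable q' g' c -> overlap_achievable q g c.
Proof.
move=> [p p_prob p_ov]; exists (fun x v => p (phi x) (rho v)).
  move=> x; have [p_ge0 p_sum] := p_prob (phi x).
  by split=> [v|]; rewrite ?p_ge0 // -p_sum [RHS](sum_bij _ _ rho_bij).
move=> x y gxy; have := p_ov (phi x) (phi y); rewrite -!g_phi => /(_ gxy).
by rewrite /qoverlap (sum_bij _ _ rho_bij); under eq_bigl do rewrite -!q_phi.
Qed.

Hypothesis phi_bij : bijective phi.

Lemma adversary_bound_transfer (c : R) :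
  adversary_bound q' g' c -> adversary_bound q g c.
Proof.
move=> [lam lam_gt0 [A]]; exists lam => //; constructor.
apply: (@Adversary _ _ _ q g lam (c * lam) (fun x y => A (phi x) (phi y))
  (fun x => adv_vec A (phi x)) (fun x y v => adv_ratio A (phi x) (phi y) (rho v))
  (fun x y => adv_dratio A (phi x) (phi y))).
- by move=> x y; exact: adv_weight_ge0.
- by move=> x y; exact: adv_weightC.
- by move=> x y gxy; rewrite adv_weight_eq0 // -!g_phi.
- by move=> x; exact: adv_vec_ge0.
- move=> b; have [x' gx' dx'] := adv_vec_gt0 A b; have [phi' phiK phi'K] := phi_bij.
  by exists (phi' x'); rewrite ?g_phi phi'K.
- move=> x; apply: le_trans (adv_eigen A (phi x)) _.
  by rewrite (sum_bij _ _ phi_bij).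
- by move=> x y v; exact: adv_ratio_gt0.
- by move=> x y v; exact: adv_ratioV.
- move=> x v; apply: le_trans (adv_load A (phi x) (rho v)).
  by rewrite [X in _ <= X](sum_bij _ _ phi_bij); under eq_bigl do rewrite !q_phi.
- by move=> x y; exact: adv_dratio_gt0.
- by move=> x y; exact: adv_dratioV.
- move=> x; apply: le_trans (adv_dload A (phi x)).
  by rewrite [X in _ <= X](sum_bij _ _ phi_bij).
Qed.

End Transfer.

(* Inputs of A as 4-tuples, so that its truth table is enumerated by computation. *)
Definition quad := (bool * bool * bool * bool)%type.

Definition quadn (z : quad) (k : nat) : bool :=
  let: (a, b, c, d) := z in nth false [:: a; b; c; d] k.

Definition quadq (z : quad) (k : 'I_4) : bool := quadn z k.

Definition quadA (z : quad) : bool := let: (a, b, c, d) := z in Afun a b c d.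

Definition flip (z : quad) (k : nat) : quad :=
  let: (a, b, c, d) := z in
  (a (+) (k == 0)%N, b (+) (k == 1)%N, c (+) (k == 2)%N, d (+) (k == 3)%N).

Definition sens (z : quad) (k : nat) : nat := if quadA (flip z k) != quadA z then 2%N else 1%N.

Definition hamming (z z' : quad) : nat :=
  sumn [seq nat_of_bool (quadn z k != quadn z' k) | k <- iota 0 4].

Definition cross (z z' : quad) : nat :=
  sumn [seq (quadn z k != quadn z' k) * (sens z k * sens z' k) | k <- iota 0 4]%N.

(* The adversary matrix of A: it charges the pairs of different value whose cross weight
   attains its minimum 4, adjacent pairs more. *)
Definition quadG (z z' : quad) : nat :=
  if (quadA z != quadA z') && (cross z z' == 4)%N then
    (if hamming z z' == 1 then 3 else 2)%N
  else 0%N.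

Ltac quad_cases z :=
  case: z => [[[[] []] []] []].

Lemma sum_pair (I J : finType) (F : I * J -> nat) :
  (\sum_p F p = \sum_i \sum_j F (i, j))%N.
Proof. by rewrite pair_bigA; apply: eq_bigr => -[]. Qed.

Lemma sum_quad (F : quad -> nat) :
  (\sum_z F z = \sum_a \sum_b \sum_c \sum_d F (a, b, c, d))%N.
Proof. by rewrite !sum_pair. Qed.

Lemma quadGC z z' : quadG z z' = quadG z' z.
Proof. by quad_cases z; quad_cases z'. Qed.

Lemma quadG_row z : (\sum_z' quadG z z' = 10)%N.
Proof. by rewrite sum_quad !big_bool; quad_cases z. Qed.

Lemma quadG_load z (k : 'I_4) :
  (\sum_(z' | quadq z k != quadq z' k) quadG z z' * sens z' k <= 4 * sens z k)%N.
Proof.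
rewrite big_mkcond sum_quad !big_bool.
by case: k => [[|[|[|[|k]]]] hk] //; quad_cases z.
Qed.

Lemma sens_gt0 z k : (0 < sens z k)%N.
Proof. by rewrite /sens; case: ifP. Qed.

Lemma sens_sqr_sum z : (\sum_(k < 4) sens z k ^ 2 = 10)%N.
Proof. by rewrite !big_ord_recl big_ord0; quad_cases z. Qed.

Lemma cross_ge z z' : quadA z != quadA z' ->
  (4 <= \sum_(k < 4 | quadq z k != quadq z' k) sens z k * sens z' k)%N.
Proof. by rewrite big_mkcond !big_ord_recl big_ord0; quad_cases z; quad_cases z'. Qed.

Lemma quad_adversary (R : rcfType) : adversary_bound quadq quadA (2 / 5 : R).
Proof.
exists 10 => //; have -> : 2 / 5 * 10 = 4 :> R by field.
constructor; apply: (@Adversary _ _ _ quadq quadA 10 4 (fun z z' => (quadG z z')%:R)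
  (fun=> 1) (fun z z' k => (sens z' k)%:R / (sens z k)%:R) (fun _ _ => 1)).
- by move=> z z'; exact: ler0n.
- by move=> z z'; rewrite quadGC.
- by move=> z z' e; rewrite /quadG e eqxx.
- by move=> z; exact: ler01.
- by case; [exists (false, false, false, false) | exists (false, false, true, false)].
- by move=> z; rewrite mulr1; under eq_bigr do rewrite mulr1; rewrite -natr_sum quadG_row.
- by move=> z z' k; rewrite divr_gt0 ?ltr0n ?sens_gt0.
- move=> z z' k; have := sens_gt0 z k; have := sens_gt0 z' k.
  by rewrite -!(ltr0n R) => s'_gt0 s_gt0; field; rewrite !lt0r_neq0.
- move=> z k; rewrite (eq_bigr (fun z' => (quadG z z' * sens z' k)%:R / (sens z k)%:R)).
    by rewrite -mulr_suml -natr_sum ler_pdivrMr ?ltr0n ?sens_gt0 // -natrM ler_nat quadG_load.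
  by move=> z' _; rewrite natrM mulrA.
- by move=> *; exact: ltr01.
- by move=> *; exact: mulr1.
- by move=> z; under eq_bigr do rewrite mulr1; rewrite -natr_sum quadG_row.
Qed.

Lemma quad_overlap (R : rcfType) : overlap_achievable quadq quadA (2 / 5 : R).
Proof.
exists (fun z (k : 'I_4) => (sens z k ^ 2)%:R / 10).
  move=> z; split=> [k|]; first by rewrite divr_ge0 ?ler0n.
  by rewrite -mulr_suml -natr_sum sens_sqr_sum divff ?pnatr_eq0.
move=> z z' zz'; rewrite /qoverlap.
rewrite (eq_bigr (fun k : 'I_4 => (sens z k * sens z' k)%:R / 10)) => [|k _]; last first.
  have -> : (sens z k ^ 2)%:R / 10 * ((sens z' k ^ 2)%:R / 10) =
      ((sens z k * sens z' k)%:R / 10 : R) ^+ 2 by rewrite !natrX natrM; field.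
  by rewrite sqrtr_sqr ger0_norm // divr_ge0 ?ler0n.
rewrite -mulr_suml -natr_sum ler_pdivlMr // (_ : 2 / 5 * 10 = 4%:R) ?ler_nat ?cross_ge //.
by field.
Qed.

Lemma eq_iterA d (x y : nat -> bool) :
  (forall k, k < 4 ^ d -> x k = y k)%N -> iterA d x = iterA d y.
Proof.
elim: d x y => [|d IH] x y xy /=; first exact: xy.
have e : (4 ^ d.+1 = 4 * 4 ^ d)%N by rewrite expnS.
by congr Afun; apply: IH => k hk; apply: xy; rewrite e; lia.
Qed.

Lemma insub_bits N (x : bits N) k (hk : (k < N)%N) :
  (if insub k is Some i then x i else false) = x (Ordinal hk).
Proof. by rewrite insubT; congr (x _); apply: val_inj. Qed.

Definition quad_of (z : bits 4) : quad :=
  (z (@Ordinal 4 0 isT), z (@Ordinal 4 1 isT), z (@Ordinal 4 2 isT), z (@Ordinal 4 3 isT)).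

Lemma quadq_of z k : quadq (quad_of z) k = z k.
Proof. by case: k => [[|[|[|[|k]]]] hk] //=; congr (z _); apply: val_inj. Qed.

Lemma quad_of_bij : bijective quad_of.
Proof.
exists (fun z => [ffun k => quadq z k]) => [z|[[[a b] c] d]]; last by rewrite /quad_of !ffunE.
by apply/ffunP => k; rewrite ffunE quadq_of.
Qed.

Lemma Aiter1 (x : bits (4 ^ 1)) : Aiter x = quadA (quad_of x).
Proof. by rewrite /Aiter /= !insub_bits //; congr Afun; congr (x _); exact: val_inj. Qed.

Lemma Aiter1_bounds (R : rcfType) :
  overlap_achievable (@bitq _) (@Aiter 1) (2 / 5 : R) /\
  adversary_bound (@bitq _) (@Aiter 1) (2 / 5 : R).
Proof.
have id_bij : bijective (@id 'I_4) by exists id.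
have q_of (x : bits (4 ^ 1)) k : bitq x k = quadq (quad_of x) (id k) by rewrite quadq_of.
split; first exact: (overlap_achievable_transfer id_bij q_of Aiter1 (quad_overlap R)).
exact: (adversary_bound_transfer q_of Aiter1 quad_of_bij (quad_adversary R)).
Qed.

Section Blocks.
Variable d : nat.

Lemma block_of_subproof (k : 'I_4) (j : 'I_(4 ^ d)) : (k * 4 ^ d + j < 4 ^ d.+1)%N.
Proof. by have := ltn_ord k; have := ltn_ord j; rewrite expnS; nia. Qed.

Definition block_of (kj : 'I_4 * 'I_(4 ^ d)) : 'I_(4 ^ d.+1) :=
  Ordinal (block_of_subproof kj.1 kj.2).

Lemma block_div_subproof (i : 'I_(4 ^ d.+1)) : (i %/ 4 ^ d < 4)%N.
Proof. by rewrite ltn_divLR ?expn_gt0 // -expnS. Qed.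

Lemma block_mod_subproof (i : 'I_(4 ^ d.+1)) : (i %% 4 ^ d < 4 ^ d)%N.
Proof. by rewrite ltn_pmod ?expn_gt0. Qed.

Definition block_split (i : 'I_(4 ^ d.+1)) : 'I_4 * 'I_(4 ^ d) :=
  (Ordinal (block_div_subproof i), Ordinal (block_mod_subproof i)).

Lemma block_ofK : cancel block_of block_split.
Proof.
move=> [k j]; congr pair; apply: val_inj => /=.
  by rewrite divnMDl ?expn_gt0 // divn_small ?addn0.
by rewrite modnMDl modn_small.
Qed.

Lemma block_splitK : cancel block_split block_of.
Proof. by move=> i; apply: val_inj => /=; rewrite -divn_eq. Qed.

Lemma block_split_bij : bijective block_split.
Proof. exact: Bijective block_splitK block_ofK. Qed.

Definition blocks (x : bits (4 ^ d.+1)) : {ffun 'I_4 -> bits (4 ^ d)} :=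
  [ffun k => [ffun j => x (block_of (k, j))]].

Lemma blocks_bij : bijective blocks.
Proof.
pose unblocks (y : {ffun 'I_4 -> bits (4 ^ d)}) : bits (4 ^ d.+1) :=
  [ffun i => y (block_split i).1 (block_split i).2].
exists unblocks => [x|y].
  by apply/ffunP => i; rewrite !ffunE -surjective_pairing block_splitK.
by apply/ffunP => k; apply/ffunP => j; rewrite !ffunE block_ofK.
Qed.

Lemma bitq_blocks x i : bitq x i = compq (@bitq _) (blocks x) (block_split i).
Proof. by rewrite /compq /bitq !ffunE -surjective_pairing block_splitK. Qed.

Lemma Aiter_blocks x : Aiter x = compf (@Aiter d) (@Aiter 1) (blocks x).
Proof.
rewrite /compf Aiter1 /Aiter /= !ffunE.
congr Afun; apply: eq_iterA => n hn; rewrite (insub_bits _ hn) ffunE insub_bits.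
all: first [by rewrite expnS; lia | by move=> ?; congr (x _); apply: val_inj => /=; lia].
Qed.

End Blocks.

Lemma Aiter_bounds (R : rcfType) d :
  overlap_achievable (@bitq _) (@Aiter d.+1) ((2 / 5 : R) ^+ d.+1) /\
  adversary_bound (@bitq _) (@Aiter d.+1) ((2 / 5 : R) ^+ d.+1).
Proof.
have [ov1 adv1] := Aiter1_bounds R.
elim: d => [|d [ov adv]]; first by rewrite expr1; split.
have c_ge0 : 0 <= (2 / 5 : R) ^+ d.+1 by rewrite exprn_ge0 // divr_ge0.
rewrite exprS; split.
- apply: (overlap_achievable_transfer (block_split_bij _) (@bitq_blocks _) (@Aiter_blocks _)).
  exact: overlap_achievable_comp.
- apply: (adversary_bound_transfer (@bitq_blocks _) (@Aiter_blocks _) (blocks_bij _)).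
  exact: adversary_bound_comp.
Qed.

Lemma sumPI_is_inv (R : realType) N (g : bits N -> bool) (c : R) : 0 < c ->
  overlap_achievable (@bitq _) g c -> adversary_bound (@bitq _) g c ->
  sumPI_is g (c^-1)%:E.
Proof.
move=> c_gt0 [p p_prob p_ov] adv.
have lower p' : prob_family p' -> (c^-1%:E <= sumPI_obj g p')%E.
  move=> p'_prob; have [x [y [gxy ov]]] := adversary_bound_overlap adv p'_prob.
  apply: (@le_trans _ _ (pair_val p' x y)).
    rewrite /pair_val; case: eqP => [_|/eqP ov_neq0]; first exact: leey.
    by rewrite lee_fin lef_pV2 ?posrE // lt0r ov_neq0 qoverlap_ge0.
  exact: (le_bigmax_cond _ (j := (x, y)) (P := fun xy => g xy.1 != g xy.2)).
split=> //; exists p => //; apply/eqP; rewrite eq_le lower // andbT.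
apply: bigmax_le => [|[x y] /= gxy]; first exact: leNye.
have ov_gt0 : 0 < overlap p x y by apply: lt_le_trans (p_ov x y gxy).
by rewrite /pair_val gt_eqF // lee_fin lef_pV2 ?posrE ?p_ov.
Qed.

Theorem mainTheorem16 (R : realType) (d : nat) (hd : (1 <= d)%N) :
  sumPI_is (@Aiter d) ((5 / 2 : R) ^+ d)%:E.
Proof.
case: d hd => // d _.
have [ov adv] := Aiter_bounds R d.
rewrite -invf_div exprVn; apply: sumPI_is_inv ov adv.
by rewrite exprn_gt0 // divr_gt0.
Qed.
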